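(* For each prime power $q$ there exists a $q^2$-divisible set $\mathcal{C}$ of points in a projective space over $\mathbb{F}_q$ with $|\mathcal{C}|=3q^3-q^2-q-1$ whose span has dimension $k$ satisfying $\max\{8,q+5\}\le k\le\max\{8,2q+3\}$.
   Context: Points are $1$-dimensional subspaces of $\mathbb{F}_q^v$. A set $\mathcal{C}$ of points is $\Delta$-divisible if there is an integer $u$ with $|\mathcal{C}\cap H|\equiv u\pmod{\Delta}$ for every hyperplane $H$ of $\mathbb{F}_q^v$, where $\mathcal{C}\cap H$ is the set of points of $\mathcal{C}$ contained in $H$. *)

From mathcomp Require Import all_boot all_order all_algebra all_field.
Set Implicit Arguments. Unset Strict Implicit. Unset Printing Implicit Defensive.
Import GRing.Theory.
Local Open Scope ring_scope.

Definition is_point (F : fieldType) (v : nat) (P : {vspace 'rV[F]_v}) : bool :=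
  (\dim P == 1)%N.

Definition is_hyperplane (F : fieldType) (v : nat) (H : {vspace 'rV[F]_v}) : bool :=
  (0 < v)%N && (\dim H == v.-1)%N.

Definition point_set (F : fieldType) (v : nat) (C : seq {vspace 'rV[F]_v}) : Prop :=
  uniq C /\ all (@is_point F v) C.

Definition count_in (F : fieldType) (v : nat) (C : seq {vspace 'rV[F]_v})
    (H : {vspace 'rV[F]_v}) : nat :=
  count (fun P => (P <= H)%VS) C.

Definition divisible (F : fieldType) (v : nat) (Delta : nat)
    (C : seq {vspace 'rV[F]_v}) : Prop :=
  exists u : nat, forall H : {vspace 'rV[F]_v},
    is_hyperplane H -> count_in C H = u %[mod Delta].

Definition span_dim (F : fieldType) (v : nat) (C : seq {vspace 'rV[F]_v}) : nat :=
  \dim (\sum_(P <- C) P)%VS.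

From mathcomp Require Import all_boot all_order all_algebra all_field.
From mathcomp Require Import ring zify.
Set Implicit Arguments. Unset Strict Implicit. Unset Printing Implicit Defensive.
Import GRing.Theory Num.Theory.
Local Open Scope ring_scope.

(* Work with vectors rather than points: a set of nonzero vectors closed under
   nonzero scalars yields a set of points whose number inside a subspace H,
   times q - 1, is the number of its vectors inside H.  The chosen vectors are
   those of q - 1 planes through a common line but off it, of a solid off a
   plane and a line in it, and of a solid off a plane and a point in it.  These
   pieces are disjoint, so by inclusion-exclusion the number of chosen vectors
   in H is an integer combination of the numbers q ^ dim (S :&: H) for
   coordinate subspaces S.  For a hyperplane H we have dim (S :&: H) >= dim S - 1,
   and q ^ k = q ^ 2 modulo (q - 1) q ^ 2 whenever k >= 2; this pins the number
   of points in H to -(q + 1) modulo q ^ 2.  Taking H to be the whole space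
   gives the number of points, and the chosen vectors span all q + 6
   coordinates. *)

Lemma count_enum (T : finType) (A : {pred T}) (P : pred T) :
  count P (enum A) = #|[pred x in A | P x]|.
Proof.
rewrite cardE -size_filter /enum_mem -filter_predI; congr size.
by apply: eq_filter => x; rewrite !inE andbC.
Qed.

Lemma size_undup_map_fibers (T : finType) (U : eqType) (f : T -> U) (A : {pred T}) k :
  (forall x, x \in A -> #|[pred y in A | f y == f x]| = k) ->
  (size (undup [seq f x | x <- enum A]) * k)%N = #|A|.
Proof.
move=> fibers; set s := [seq f x | x <- enum A].
have := big_undup_iterop_count addn s xpredT (fun _ => 1%N).
rewrite big_map sum1_size -cardE => <-.
rewrite (eq_big_seq (fun _ => k)) => [|u].
  by rewrite big_const_seq count_predT iter_addn_0 mulnC.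
rewrite mem_undup => /mapP[x Ax ->].
by rewrite Monoid.iteropE iter_addn_0 mul1n count_map count_enum fibers // -mem_enum.
Qed.

Lemma sumr_indicator (R : pzSemiRingType) (T : finType) (A P : {pred T}) :
  \sum_(x in A) ((P x)%:R : R) = #|[pred x in A | P x]|%:R.
Proof.
rewrite (eq_bigr (fun x => if P x then 1 else 0)) => [|x _]; last by case: (P x).
by rewrite -big_mkcondr sumr_const.
Qed.

Lemma sumr_indicator_exclusive (R : pzSemiRingType) (I : finType) (P : pred I) :
  (forall i j, P i -> P j -> i = j) -> \sum_i ((P i)%:R : R) = [exists i, P i]%:R.
Proof.
move=> P_uniq; have [i Pi | P0] := pickP P; last first.
  by rewrite big1 => [|i _]; [rewrite (introF existsP) // => -[i]; rewrite P0 | rewrite P0].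
rewrite (bigD1 i) //= big1 ?addr0 => [|j ji]; last first.
  by case: (boolP (P j)) => // Pj; rewrite (P_uniq _ _ Pj Pi) eqxx in ji.
by rewrite Pi (introT existsP) //; exists i.
Qed.

Lemma dvdz_exp_sub_sqr (m : int) k : (2 <= k)%N -> ((m - 1) * m ^+ 2 %| m ^+ k - m ^+ 2)%Z.
Proof.
move=> k_ge2; apply/dvdzP; exists (\sum_(i < k - 2) m ^+ i).
rewrite -[X in m ^+ X](subnK k_ge2) exprD.
have -> : m ^+ (k - 2) * m ^+ 2 - m ^+ 2 = (m ^+ (k - 2) - 1) * m ^+ 2 by ring.
by rewrite subrX1; ring.
Qed.

Lemma vlineZ (F : fieldType) (vT : vectType F) (c : F) (x : vT) :
  c != 0 -> <[c *: x]>%VS = <[x]>%VS.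
Proof.
move=> c0; apply/eqP; rewrite eqEsubv -!memvE memvZ ?memv_line //.
by rewrite -[x in x \in _](scalerK c0) memvZ ?memv_line.
Qed.

Section PointsOfPredicate.
Variables (F : finFieldType) (v : nat).
Local Notation q := #|F|.
Local Notation vT := 'rV[F]_v.

Lemma card_line_generators (x : vT) : x != 0 ->
  #|[pred y : vT | (y != 0) && (<[y]>%VS == <[x]>%VS)]| = q.-1.
Proof.
move=> x0; have scale_inj : injective (fun c : F => c *: x).
  by move=> c d /eqP; rewrite -subr_eq0 -scalerBl scaler_eq0 subr_eq0 (negPf x0) orbF => /eqP.
rewrite -(cardC1 (0 : F)) -(card_imset _ scale_inj); apply: eq_card => y.
rewrite !inE; apply/andP/imsetP => [[y0 /eqP yx] | [c c0 ->]].
  have /vlineP[c yE] : y \in <[x]>%VS by rewrite -yx memv_line.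
  by exists c; rewrite // inE; apply: contraNneq y0 => c0; rewrite yE c0 scale0r.
by rewrite inE in c0; rewrite scaler_eq0 (negPf c0) (negPf x0) vlineZ.
Qed.

Definition points_of (P : pred vT) : seq {vspace vT} :=
  undup [seq <[x]>%VS | x <- enum P].

Lemma mem_sum_points_of (P : pred vT) x : P x -> x \in (\sum_(p <- points_of P) p)%VS.
Proof.
move=> Px; rewrite memvE (big_rem <[x]>%VS) ?addvSl //.
by rewrite mem_undup map_f ?mem_enum.
Qed.

Variable P : pred vT.
Hypothesis P0 : ~~ P 0.
Hypothesis PZ : forall (c : F) x, c != 0 -> P (c *: x) = P x.

Lemma points_of_point_set : point_set (points_of P).
Proof.
split; first exact: undup_uniq.
apply/allP => p; rewrite mem_undup => /mapP[x Px ->].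
rewrite mem_enum in Px; rewrite /is_point dim_vline eqb1; by apply: contraNneq P0 => <-.
Qed.

Lemma count_in_points_of (H : {vspace vT}) :
  (count_in (points_of P) H * q.-1)%N = #|[pred x | P x && (x \in H)]|.
Proof.
have -> : count_in (points_of P) H =
          size (undup [seq <[x]>%VS | x <- enum [pred x | P x && (x \in H)]]).
  rewrite /count_in /points_of -size_filter filter_undup filter_map /enum_mem -filter_predI.
  by congr (size (undup (map _ _))); apply: eq_filter => x; rewrite !inE memvE andbC.
apply: size_undup_map_fibers => x; rewrite inE => /andP[Px Hx].
have x0 : x != 0 by apply: contraNneq P0 => <-.
rewrite -(card_line_generators x0); apply: eq_card => y; rewrite !inE.
apply: andb_id2r => /eqP yx; rewrite memvE yx -memvE Hx andbT.
have /vlineP[c ->] : y \in <[x]>%VS by rewrite -yx memv_line.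
rewrite scaler_eq0 (negPf x0) orbF.
by have [-> | c0] := eqVneq c 0; rewrite ?scale0r ?(negPf P0) ?PZ.
Qed.
End PointsOfPredicate.

Section CoordinateSubspaces.
Variables (F : fieldType) (v : nat).
Local Notation vT := 'rV[F]_v.
Implicit Types (A B : {set 'I_v}) (x : vT).

Definition supp (x : vT) : {set 'I_v} := [set j | x 0 j != 0].

Definition coordsp (A : {set 'I_v}) : {vspace vT} := <<[seq 'e_j | j in A]>>%VS.

Lemma memv_span_deltas (s : seq 'I_v) x :
  (x \in <<[seq 'e_j | j <- s]>>%VS) = (supp x \subset [set j in s]).
Proof.
apply/idP/subsetP => [xs j | sxs].
  rewrite (coord_span (X := in_tuple [seq 'e_j | j <- s]) xs) !inE summxE.
  apply: contraNT => js; rewrite big1 // => i _.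
  have /mapP[k ks ->] := mem_nth 0 (ltn_ord i).
  by rewrite !mxE eqxx; case: eqP => [jk | _]; [rewrite jk ks in js | rewrite mulr0].
rewrite [x]row_sum_delta; apply: rpred_sum => j _.
have [jx | ] := boolP (j \in supp x); last by rewrite inE negbK => /eqP ->; rewrite scale0r mem0v.
by rewrite memvZ ?memv_span ?map_f // -[j \in s]in_set sxs.
Qed.

Lemma memv_coordsp A x : (x \in coordsp A) = (supp x \subset A).
Proof. by rewrite memv_span_deltas set_enum. Qed.

Lemma coordspI A B : (coordsp A :&: coordsp B)%VS = coordsp (A :&: B).
Proof. by apply/vspaceP => x; rewrite memv_cap !memv_coordsp subsetI. Qed.

Lemma coordspS A B : A \subset B -> (coordsp A <= coordsp B)%VS.
Proof. by move=> AB; apply/subvP => x; rewrite !memv_coordsp => /subset_trans; apply. Qed.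

Lemma supp_delta j : supp 'e_j = [set j].
Proof. by apply/setP => i; rewrite !inE mxE eqxx; case: (i == j); rewrite ?oner_eq0 ?eqxx. Qed.

Lemma supp_delta2 a b : a != b -> supp ('e_a + 'e_b) = [set a; b].
Proof.
move=> ab; apply/setP => i; rewrite !inE !mxE eqxx /=.
have [-> | _] := eqVneq i a; first by rewrite (negPf ab) addr0 oner_eq0.
by case: (i == b); rewrite ?add0r ?addr0 ?oner_eq0 ?eqxx.
Qed.

Lemma free_deltas (s : seq 'I_v) : uniq s -> free [seq 'e_j : vT | j <- s].
Proof.
elim: s => [|a s IH] /=; first by rewrite /free span_nil dimv0.
by case/andP => as_ us; rewrite free_cons IH // andbT memv_span_deltas supp_delta sub1set inE.
Qed.

Lemma dim_coordsp A : \dim (coordsp A) = #|A|.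
Proof. by rewrite (eqP (free_deltas (enum_uniq A))) size_map -cardE. Qed.
End CoordinateSubspaces.
Arguments coordsp {F v} A.

Section CountingVectors.
Variables (F : finFieldType) (v : nat) (H : {vspace 'rV[F]_v}).
Local Notation q := #|F|.
Implicit Types (S U W : {vspace 'rV[F]_v}).

Definition nvec S : int := q%:R ^+ \dim (S :&: H).

Lemma sum_mem_vspace S : \sum_(x in H) ((x \in S)%:R : int) = nvec S.
Proof.
rewrite sumr_indicator /nvec -natrX -card_vspace; congr _%:R.
by apply: eq_card => x; apply/andP/memv_capP => -[xH xS]; split.
Qed.

Lemma sum_mem_vspaceD S U : (U <= S)%VS ->
  \sum_(x in H) (((x \in S) && (x \notin U))%:R : int) = nvec S - nvec U.
Proof.
move=> /subvP sUS; rewrite -!sum_mem_vspace -sumrB; apply: eq_bigr => x _.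
have : (x \in U) ==> (x \in S) by apply/implyP/sUS.
by case: (x \in U); case: (x \in S) => //= _; lia.
Qed.

Lemma sum_mem_vspaceD2 W U (U' : {vspace 'rV[F]_v}) : (U <= W)%VS -> (U' <= W)%VS ->
  \sum_(x in H) (([&& x \in W, x \notin U & x \notin U'])%:R : int) =
  nvec W - nvec U - nvec U' + nvec (U :&: U').
Proof.
move=> /subvP sUW /subvP sU'W; rewrite -!sum_mem_vspace -!sumrB -big_split /=.
apply: eq_bigr => x _; rewrite memv_cap.
have : (x \in U) ==> (x \in W) by apply/implyP/sUW.
have : (x \in U') ==> (x \in W) by apply/implyP/sU'W.
by case: (x \in U); case: (x \in U'); case: (x \in W) => //= _ _; lia.
Qed.
End CountingVectors.

Lemma nvecvf (F : finFieldType) v (S : {vspace 'rV[F]_v}) : nvec fullv S = #|F|%:R ^+ \dim S.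
Proof. by rewrite /nvec capvf. Qed.

Lemma dim_capv_hyperplane (F : fieldType) v (S H : {vspace 'rV[F]_v}) :
  is_hyperplane H -> (\dim S <= (\dim (S :&: H)).+1)%N.
Proof.
case/andP => v_gt0 /eqP dimH; have := dimv_sum_cap S H.
have := dimvS (subvf (S + H)); rewrite dimvf /dim /= mul1n; lia.
Qed.

Section Construction.
Variable F : finFieldType.
Local Notation q := #|F|.
(* Coordinates 0, ..., 6 carry the two solids; coordinate 7 + k carries the
   k-th plane of the fan through the line spanned by coordinates 0 and 1. *)
Local Notation v := (7 + q.-1)%N.
Local Notation vT := 'rV[F]_v.
Implicit Types (s t : seq nat) (x : vT).

Lemma q_gt1 : (1 < q)%N. Proof. exact: finNzRing_gt1. Qed.

Definition cspace s : {vspace vT} := coordsp [set j : 'I_v | val j \in s].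

Lemma cspaceI s t : (cspace s :&: cspace t)%VS = cspace [seq i <- s | i \in t].
Proof. by rewrite coordspI; congr coordsp; apply/setP => j; rewrite !inE mem_filter andbC. Qed.

Lemma cspaceS s t : all (mem t) s -> (cspace s <= cspace t)%VS.
Proof. by move=> /allP st; apply/coordspS/subsetP => j; rewrite !inE => /st. Qed.

Lemma dim_cspace s : uniq s -> all (fun i => i < v)%N s -> \dim (cspace s) = size s.
Proof.
move=> s_uniq /allP s_lt; rewrite dim_coordsp cardE -(size_map val).
apply/perm_size/uniq_perm => [| // | i]; first by rewrite (map_inj_uniq val_inj) enum_uniq.
apply/mapP/idP => [[j] | i_s]; first by rewrite mem_enum inE => js ->.
by exists (Ordinal (s_lt i i_s)); rewrite ?mem_enum ?inE.
Qed.

Lemma delta_in_cspace (j : 'I_v) s : ('e_j \in cspace s) = (val j \in s).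
Proof. by rewrite memv_coordsp supp_delta sub1set inE. Qed.

Lemma delta2_in_cspace (i j : 'I_v) s :
  i != j -> ('e_i + 'e_j \in cspace s) = (val i \in s) && (val j \in s).
Proof. by move=> ij; rewrite memv_coordsp supp_delta2 // subUset !sub1set !inE. Qed.

Definition plane (k : 'I_q.-1) := cspace [:: 0; 1; 7 + k]%N.
Local Notation line01 := (cspace [:: 0; 1]).
Local Notation solid0123 := (cspace [:: 0; 1; 2; 3]).
Local Notation plane023 := (cspace [:: 0; 2; 3]).
Local Notation solid0456 := (cspace [:: 0; 4; 5; 6]).
Local Notation plane456 := (cspace [:: 4; 5; 6]).
Local Notation point0 := (cspace [:: 0]).

Definition in_construction x : bool :=
  [|| [exists k, (x \in plane k) && (x \notin line01)],
      [&& x \in solid0123, x \notin plane023 & x \notin line01] |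
      [&& x \in solid0456, x \notin plane456 & x \notin point0]].

Lemma plane_capv k k' : k != k' -> (plane k :&: plane k')%VS = line01.
Proof. by move=> kk'; rewrite cspaceI /= !inE eqn_add2l val_eqE (negPf kk'). Qed.

Lemma dim_plane k : \dim (plane k) = 3%N.
Proof. by rewrite dim_cspace //= ltn_add2l ltn_ord. Qed.

Lemma in_construction_indicator x : ((in_construction x)%:R : int) =
  \sum_k ((x \in plane k) && (x \notin line01))%:R
  + ([&& x \in solid0123, x \notin plane023 & x \notin line01])%:R
  + ([&& x \in solid0456, x \notin plane456 & x \notin point0])%:R.
Proof.
have planeIsolid0123 k : (plane k :&: solid0123)%VS = line01 by rewrite cspaceI.
have planeIsolid0456 k : (plane k :&: solid0456)%VS = point0 by rewrite cspaceI.
have solid0123Isolid0456 : (solid0123 :&: solid0456)%VS = point0 by rewrite cspaceI.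
rewrite sumr_indicator_exclusive => [|k k' /andP[xk xL] /andP[xk' _]]; last first.
  apply/eqP; apply: contraNT xL => kk'.
  by rewrite -(plane_capv kk') memv_cap xk xk'.
rewrite /in_construction.
case: existsP => [[k /andP[xk xL]] | _].
  have /negPf-> : ~~ [&& x \in solid0123, x \notin plane023 & x \notin line01].
    by apply/and3P => -[x2 _ _]; move: xL; rewrite -(planeIsolid0123 k) memv_cap xk x2.
  have /negPf-> : ~~ [&& x \in solid0456, x \notin plane456 & x \notin point0].
    by apply/and3P => -[x3 _]; rewrite -(planeIsolid0456 k) memv_cap xk x3.
  by rewrite addr0.
case: and3P => [[x2 _ xL] | _]; last by rewrite add0r.
have /negPf-> : ~~ [&& x \in solid0456, x \notin plane456 & x \notin point0].
  by apply/and3P => -[x3 _]; rewrite -solid0123Isolid0456 memv_cap x2 x3.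
by rewrite add0r addr0.
Qed.

Lemma count_in_construction (H : {vspace vT}) :
  (#|[pred x | in_construction x && (x \in H)]|%:R : int) =
  \sum_k (nvec H (plane k) - nvec H line01)
  + (nvec H solid0123 - nvec H plane023 - nvec H line01 + nvec H point0)
  + (nvec H solid0456 - nvec H plane456 - nvec H point0 + 1).
Proof.
rewrite -(eq_card (fun x => andbC _ _)) -sumr_indicator.
under eq_bigr do rewrite in_construction_indicator.
rewrite big_split big_split /= exchange_big /=.
under eq_bigr do rewrite sum_mem_vspaceD ?cspaceS //.
rewrite !sum_mem_vspaceD2 ?cspaceS // !cspaceI /=.
have /eqP-> : cspace [::] == 0%VS by rewrite -dimv_eq0 dim_cspace.
by rewrite /nvec cap0v dimv0 expr0.
Qed.

Lemma in_construction0 : ~~ in_construction 0.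
Proof. by rewrite /in_construction !mem0v orbF; apply/existsP => -[k]; rewrite andbF. Qed.

Lemma in_constructionZ (c : F) x : c != 0 -> in_construction (c *: x) = in_construction x.
Proof.
move=> c0; rewrite /in_construction !rpredZeq (negPf c0).
by congr (_ || _); apply: eq_existsb => k; rewrite rpredZeq (negPf c0).
Qed.

Definition construction : seq {vspace vT} := points_of in_construction.

Lemma count_in_construction_dvd (H : {vspace vT}) : is_hyperplane H ->
  ((q%:R - 1) * q%:R ^+ 2 %| (count_in construction H * q.-1)%:R - (1 - q%:R ^+ 2))%Z.
Proof.
move=> hypH; set M : int := _ * _.
have dvd_nvec S : (3 <= \dim S)%N -> (M %| nvec H S - q%:R ^+ 2)%Z.
  move=> dimS; apply: dvdz_exp_sub_sqr.
  by have /(leq_trans dimS) := dim_capv_hyperplane S hypH.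
have dvd_line : (M %| q%:R * nvec H line01 - q%:R ^+ 2)%Z.
  rewrite /nvec -exprS; apply: dvdz_exp_sub_sqr.
  by have := dim_capv_hyperplane line01 hypH; rewrite dim_cspace.
rewrite count_in_points_of ?in_construction0 //; last exact: in_constructionZ.
rewrite count_in_construction; set N := nvec H; pose D S := N S - q%:R ^+ 2.
have -> : \sum_k (N (plane k) - N line01) + (N solid0123 - N plane023 - N line01 + N point0)
          + (N solid0456 - N plane456 - N point0 + 1) - (1 - q%:R ^+ 2) =
          \sum_k D (plane k) + M - (q%:R * N line01 - q%:R ^+ 2)
          + D solid0123 - D plane023 + D solid0456 - D plane456.
  rewrite /D !sumrB !sumr_const card_ord /M -[in q%:R](prednK (ltnW q_gt1)).
  ring.
apply: rpredB; last by apply: dvd_nvec; rewrite dim_cspace.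
apply: rpredD; last by apply: dvd_nvec; rewrite dim_cspace.
apply: rpredB; last by apply: dvd_nvec; rewrite dim_cspace.
apply: rpredD; last by apply: dvd_nvec; rewrite dim_cspace.
apply: rpredB dvd_line; apply: rpredD (dvdzz M).
by apply: rpred_sum => k _; apply: dvd_nvec; rewrite dim_plane.
Qed.

Lemma count_in_construction_mod (H : {vspace vT}) : is_hyperplane H ->
  count_in construction H = q ^ 2 - q - 1 %[mod q ^ 2].
Proof.
move/count_in_construction_dvd; set n := count_in construction H.
have q1 : (q.-1%:R : int) = q%:R - 1 by rewrite -subn1 natrB // ltnW // q_gt1.
have -> : (n * q.-1)%:R - (1 - q%:R ^+ 2) = (q%:R - 1) * (n + q + 1)%:R :> int.
  by rewrite natrM q1 !natrD; ring.
rewrite dvdz_mul2l; last by rewrite subr_eq0 pnatr_eq1 neq_ltn q_gt1 orbT.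
rewrite -natrX !natz => /= dvd_n.
have q1_le : (q + 1 <= q ^ 2)%N by have := q_gt1; nia.
by apply/eqP; rewrite -(eqn_modDr (q + 1)) -subnDA subnK // modnn addnA.
Qed.

Lemma size_construction : size construction = (3 * q ^ 3 - q ^ 2 - q - 1)%N.
Proof.
have count_full : count_in construction fullv = size construction.
  by rewrite /count_in (eq_count (a2 := predT)) ?count_predT // => p; apply: subvf.
have := count_in_points_of in_construction0 in_constructionZ fullv.
rewrite -/construction count_full => /(congr1 (fun n => n%:R : int)).
rewrite count_in_construction !nvecvf.
under eq_bigr do rewrite nvecvf dim_plane.
rewrite !dim_cspace //= sumr_const card_ord => count_eq.
have : ((size construction + q ^ 2 + q + 1) * q.-1)%:R = (3 * q ^ 3 * q.-1)%:R :> int.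
  rewrite !mulnDl !natrD count_eq !natrM ?natrX -[in q%:R](prednK (ltnW q_gt1)); ring.
move/eqP; rewrite eqr_nat eqn_pmul2r; last by rewrite -subn1 subn_gt0 q_gt1.
by move/eqP <-; rewrite -!subnDA -!addnA addnK.
Qed.

Lemma span_construction : (\sum_(p <- construction) p)%VS = fullv.
Proof.
set S := (\sum_(p <- construction) p)%VS.
have span_step (i j : 'I_v) : 'e_i \in S -> i != j -> in_construction ('e_i + 'e_j) -> 'e_j \in S.
  by move=> ei ij /mem_sum_points_of eij; rewrite -(addKr 'e_i 'e_j) rpredD ?rpredN.
have e_fan (k : 'I_q.-1) : 'e_(rshift 7 k) \in S.
  apply/mem_sum_points_of/orP; left; apply/existsP; exists k.
  by rewrite !delta_in_cspace !inE eqxx.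
have q1_gt0 : (0 < q.-1)%N by rewrite -subn1 subn_gt0 q_gt1.
pose k0 : 'I_q.-1 := Ordinal q1_gt0.
have e0 (h : (0 < v)%N) : 'e_(Ordinal h) \in S.
  apply: (span_step _ _ (e_fan k0)) => //; apply/orP; left; apply/existsP; exists k0.
  by rewrite !delta2_in_cspace // !inE eqxx.
have e1 (h : (1 < v)%N) : 'e_(Ordinal h) \in S.
  apply: (span_step _ _ (e_fan k0)) => //; apply/orP; left; apply/existsP; exists k0.
  by rewrite !delta2_in_cspace // !inE eqxx.
apply/eqP; rewrite eqEsubv subvf /=; apply/subvP => x _; rewrite [x]row_sum_delta.
apply: rpred_sum => -[[|[|[|[|[|[|[|m]]]]]]] hj] _; apply: memvZ.
- exact: e0.
- exact: e1.
- by apply: (span_step _ _ (e1 isT)) => //; apply/or3P/Or32; rewrite !delta2_in_cspace.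
- by apply: (span_step _ _ (e1 isT)) => //; apply/or3P/Or32; rewrite !delta2_in_cspace.
- by apply: (span_step _ _ (e0 isT)) => //; apply/or3P/Or33; rewrite !delta2_in_cspace.
- by apply: (span_step _ _ (e0 isT)) => //; apply/or3P/Or33; rewrite !delta2_in_cspace.
- by apply: (span_step _ _ (e0 isT)) => //; apply/or3P/Or33; rewrite !delta2_in_cspace.
have -> : Ordinal hj = rshift 7 (Ordinal (hj : (m < q.-1)%N)) by apply: val_inj.
exact: e_fan.
Qed.

Lemma span_dim_construction : span_dim construction = (q + 6)%N.
Proof.
rewrite /span_dim span_construction dimvf /dim /= mul1n.
by rewrite -[in RHS](prednK (ltnW q_gt1)) addSn -addnS addnC.
Qed.
End Construction.

Theorem corollary4p14 (F : finFieldType) :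
  let q := #|F| in
  exists (v : nat) (C : seq {vspace 'rV[F]_v}),
    [/\ point_set C,
        divisible (q ^ 2) C,
        size C = (3 * q ^ 3 - q ^ 2 - q - 1)%N,
        (maxn 8 (q + 5) <= span_dim C)%N
      & (span_dim C <= maxn 8 (2 * q + 3))%N].
Proof.
move=> q; exists (7 + q.-1)%N, (construction F).
have q_gt1 : (1 < q)%N := q_gt1 F.
rewrite span_dim_construction; split; try lia.
- exact: points_of_point_set (in_construction0 F).
- by exists (q ^ 2 - q - 1)%N => H; apply: count_in_construction_mod.
- exact: size_construction.
Qed.
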